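(* Let $\mathbf{A}\in\mathbb{R}^{m\times n}$ have rows $\mathbf{a}_1^\mathsf{T},\dots,\mathbf{a}_m^\mathsf{T}$ and let $\lambda>\max_l\|\mathbf{a}_l\|_\infty$. Then every stationary point $\hat{\boldsymbol{x}}$ of $$\text{(P}_\lambda\text{)}\quad \min_{\boldsymbol{x}\in[-1,1]^n}\ \max_{l\in\{1,\dots,m\}}\mathbf{a}_l^\mathsf{T}\boldsymbol{x}-\lambda\|\boldsymbol{x}\|_1$$ satisfies $\hat{x}_i\in\{-1,0,1\}$ for all $i=1,\dots,n$.
   Context: A point $\hat{\boldsymbol{x}}\in[-1,1]^n$ is a stationary point of (P$_\lambda$) if there exist $\mathbf{u},\mathbf{v}\in\mathbb{R}^n_{+}$ such that $\mathbf{0}\in\partial\big(\max_l\mathbf{a}_l^\mathsf{T}\hat{\boldsymbol{x}}\big)-\lambda\,\partial\|\hat{\boldsymbol{x}}\|_1-\mathbf{u}+\mathbf{v}$ and $u_i(\hat{x}_i+1)=0$, $v_i(\hat{x}_i-1)=0$ for all $i$, where $\partial$ denotes the convex subdifferential of the convex functions $\boldsymbol{x}\mapsto\max_l\mathbf{a}_l^\mathsf{T}\boldsymbol{x}$ and $\boldsymbol{x}\mapsto\|\boldsymbol{x}\|_1$ (a set sum/difference of sets). *)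

(* Vectors in R^n are functions 'I_n -> R; A is an
   (m.+1) x n real matrix (m.+1 >= 1 rows, so max_l is well defined). *)
From HB Require Import structures.
From mathcomp Require Import all_boot all_order all_algebra.
From mathcomp Require Import reals.
Set Implicit Arguments. Unset Strict Implicit. Unset Printing Implicit Defensive.
Import Order.TTheory GRing.Theory Num.Theory.
Local Open Scope ring_scope.

Section Defs.
Variable R : realType.

Definition dotv n (g x : 'I_n -> R) : R := \sum_(i < n) g i * x i.

Definition norm1 n (x : 'I_n -> R) : R := \sum_(i < n) `|x i|.

Definition norminf n (x : 'I_n -> R) : R := \big[Num.max/0]_(i < n) `|x i|.

Definition subdiff n (f : ('I_n -> R) -> R) (x g : 'I_n -> R) : Prop :=
  forall y : 'I_n -> R, f x + dotv g (fun i => y i - x i) <= f y.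

Definition maxlin m n (A : 'M[R]_(m.+1, n)) (x : 'I_n -> R) : R :=
  \big[Num.max/ dotv (fun j => A ord0 j) x]_(l < m.+1) dotv (fun j => A l j) x.

Definition stationary m n (A : 'M[R]_(m.+1, n)) (lam : R) (x : 'I_n -> R) : Prop :=
  (forall i, -1 <= x i <= 1) /\
  exists (u v g h : 'I_n -> R),
    (forall i, 0 <= u i /\ 0 <= v i) /\
    subdiff (maxlin A) x g /\
    subdiff (@norm1 n) x h /\
    (forall i, g i - lam * h i - u i + v i = 0) /\
    (forall i, u i * (x i + 1) = 0 /\ v i * (x i - 1) = 0).
End Defs.

From HB Require Import structures.
From mathcomp Require Import all_boot all_order all_algebra.
From mathcomp Require Import reals.
From mathcomp Require Import lra.
Import Order.TTheory GRing.Theory Num.Theory.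
Local Open Scope ring_scope.

(* Off the faces x_i = -1 and x_i = 1 the multipliers u_i, v_i vanish, so the
   stationarity condition reads g_i = lam h_i.  Testing the subgradient
   inequalities along the i-th coordinate direction shows that |g_i| is at most
   max_l |a_li| < lam, while h_i = sign x_i when x_i <> 0; hence x_i = 0. *)

Set Implicit Arguments. Unset Strict Implicit.

Section CoordinateSubgradients.
Variable R : realType.

Definition bump n (x : 'I_n -> R) (i : 'I_n) (t : R) : 'I_n -> R :=
  fun j => x j + (if j == i then t else 0).

Lemma sum_mul_delta n (g : 'I_n -> R) i t :
  \sum_(j < n) g j * (if j == i then t else 0) = g i * t.
Proof.
by rewrite (bigD1 i) //= eqxx big1 ?addr0 // => j /negbTE ->; rewrite mulr0.
Qed.

Lemma dotv_bump n (g x : 'I_n -> R) i t :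
  dotv g (bump x i t) = dotv g x + g i * t.
Proof.
by rewrite /dotv -sum_mul_delta -big_split; apply: eq_bigr => j _; rewrite mulrDr.
Qed.

Lemma subdiff_bump n (f : ('I_n -> R) -> R) x g i t :
  subdiff f x g -> f x + g i * t <= f (bump x i t).
Proof.
move=> /(_ (bump x i t)); congr (_ + _ <= _).
by rewrite -sum_mul_delta; apply: eq_bigr => j _; rewrite /bump addrC addKr.
Qed.

Lemma norm1_bump n (x : 'I_n -> R) i t :
  norm1 (bump x i t) = norm1 x - `|x i| + `|x i + t|.
Proof.
rewrite /norm1 (bigD1 i) //= [in RHS](bigD1 i) //= {1}/bump eqxx.
rewrite (eq_bigr (fun j => `|x j|)) => [|j /negbTE ji]; last by rewrite /bump ji addr0.
by lra.
Qed.

Lemma subdiff_norm1_coord n (x h : 'I_n -> R) i :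
  subdiff (@norm1 R n) x h -> h i * x i = `|x i|.
Proof.
move=> hh; have := subdiff_bump i (- x i) hh; have := subdiff_bump i (x i) hh.
rewrite !norm1_bump subrr normr0 -mulr2n normrMn mulrN.
by move=> up down; apply/eqP; rewrite eq_le; apply/andP; split; lra.
Qed.

Lemma subdiff_norm1_sign n (x h : 'I_n -> R) i :
  subdiff (@norm1 R n) x h -> x i != 0 -> `|h i| = 1.
Proof.
move=> /subdiff_norm1_coord hxi xi0.
apply: (@mulIf _ `|x i|); first by rewrite normr_eq0.
by rewrite -normrM hxi normr_id mul1r.
Qed.

Lemma bigmax_attained m (F : 'I_m.+1 -> R) :
  exists l, \big[Num.max/F ord0]_(l < m.+1) F l = F l.
Proof.
apply: (big_ind (fun z => exists l, z = F l)) => [|a b [la ->] [lb ->]|l _].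
- by exists ord0.
- by have [_|_] := leP (F la) (F lb); [exists lb | exists la].
- by exists l.
Qed.

Lemma subdiff_maxlin_coord m n (A : 'M[R]_(m.+1, n)) x g i t :
  subdiff (maxlin A) x g -> exists l, g i * t <= A l i * t.
Proof.
move=> /(subdiff_bump i t); rewrite {2}/maxlin.
have [l ->] := bigmax_attained (fun l => dotv (fun j => A l j) (bump x i t)).
rewrite dotv_bump => hle; exists l.
have hl : dotv (fun j => A l j) x <= maxlin A x by exact: le_bigmax.
by rewrite -(lerD2l (maxlin A x)); apply: le_trans hle _; rewrite lerD2r.
Qed.

Lemma subdiff_maxlin_norm_lt m n (A : 'M[R]_(m.+1, n)) x g i (c : R) :
  (forall l, `|A l i| < c) -> subdiff (maxlin A) x g -> `|g i| < c.
Proof.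
move=> Ac hg; rewrite ltr_norml.
have [l1] := subdiff_maxlin_coord i 1 hg; have [l2] := subdiff_maxlin_coord i (-1) hg.
rewrite !mulr1 !mulrN1 lerN2 => le2 le1.
move: (Ac l1) (Ac l2); rewrite !ltr_norml => /andP[_ lt1] /andP[lt2 _].
by rewrite (lt_le_trans lt2 le2) (le_lt_trans le1 lt1).
Qed.

Lemma norminf_ge n (x : 'I_n -> R) i : `|x i| <= norminf x.
Proof. exact: le_bigmax. Qed.

Lemma stationary_interior_coord m n (A : 'M[R]_(m.+1, n)) lam x i :
  stationary A lam x -> x i != -1 -> x i != 1 ->
  exists g h, [/\ subdiff (maxlin A) x g, subdiff (@norm1 R n) x h
                & g i = lam * h i].
Proof.
move=> [_ [u [v [g [h [_ [hg [hh [heq hc]]]]]]]]] xm1 x1; exists g, h; split=> //.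
have [/eqP + /eqP] := hc i; rewrite !mulf_eq0 addr_eq0 subr_eq0.
rewrite (negbTE xm1) (negbTE x1) !orbF => /eqP u0 /eqP v0.
by apply/eqP; rewrite -subr_eq0 -(heq i) u0 v0 subr0 addr0.
Qed.

End CoordinateSubgradients.

Theorem theorem6 (R : realType) (m n : nat) (A : 'M[R]_(m.+1, n)) (lam : R)
  (hlam : forall l : 'I_m.+1, norminf (fun j => A l j) < lam)
  (x : 'I_n -> R) (hx : stationary A lam x) :
  forall i : 'I_n, x i = -1 \/ x i = 0 \/ x i = 1.
Proof.
move=> i.
have [->|xm1] := eqVneq (x i) (-1); first by left.
have [->|x0] := eqVneq (x i) 0; first by right; left.
have [->|x1] := eqVneq (x i) 1; first by right; right.
have [g [h [hg hh gi]]] := stationary_interior_coord hx xm1 x1.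
have Alam l : `|A l i| < lam by apply: le_lt_trans (hlam l); apply: norminf_ge.
have := subdiff_maxlin_norm_lt Alam hg.
by rewrite gi normrM (subdiff_norm1_sign hh x0) mulr1 ltNge ler_norm.
Qed.
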